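(* Let $\mathcal{G}$ be a directed path on $N$ nodes with unit edge weights, whose nodes are labelled $1,\dots,N$ in the order in which they appear along the path starting from the root (so the edges are from $i+1$ to $i$ for $i=1,\dots,N-1$, with weight $1$). Then the entries of its matrix $X$ are $$x_{k,j}=\frac{2N^2+3N+1+3k^2+3j^2-3(N+1)k-3(N+1)j}{3N}-|k-j|,\qquad 1\le k,j\le N.$$
   Context: For a directed graph with nonnegative adjacency matrix $A=[a_{i,j}]$ ($a_{i,j}>0$ iff there is an edge from $i$ to $j$), let $D$ be the diagonal matrix of out-degrees $d_k=\sum_j a_{k,j}$ and $L=D-A$. Let $\Pi=I_N-\frac1N\mathbf{1}_N\mathbf{1}_N^T$, $Q\in\mathbb{R}^{(N-1)\times N}$ with $Q\mathbf{1}_N=0$, $QQ^T=I_{N-1}$, $Q^TQ=\Pi$; $\overline L=QLQ^T$; $\Sigma$ the unique solution of $\overline L\Sigma+\Sigma\overline L^T=I_{N-1}$; and $X=2Q^T\Sigma Q$ (independent of $Q$). The root of the path is its unique node of out-degree $0$. *)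

From HB Require Import structures.
From mathcomp Require Import all_boot all_order all_algebra.
Set Implicit Arguments. Unset Strict Implicit. Unset Printing Implicit Defensive.
Import Order.TTheory GRing.Theory Num.Theory.
Local Open Scope ring_scope.

Definition outdeg_mx (R : ringType) (N : nat) (A : 'M[R]_N) : 'M[R]_N :=
  diag_mx (\row_k (\sum_j A k j)).

Definition laplacian (R : ringType) (N : nat) (A : 'M[R]_N) : 'M[R]_N :=
  outdeg_mx A - A.

(* Adjacency matrix of the directed path with unit weights, nodes labelled
   1..N from the root (0-indexed here as 0..N-1): edges (i+1) -> i, weight 1,
   i.e. a_{i,j} = 1 iff i = j+1. *)
Definition path_adj (R : ringType) (N : nat) : 'M[R]_N :=
  \matrix_(i < N, j < N) (if (i : nat) == (j : nat).+1 then 1 else 0).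

Definition Pi_mx (R : fieldType) (N : nat) : 'M[R]_N :=
  1%:M - (N%:R)^-1 *: (const_mx 1 : 'M[R]_(N, 1)) *m (const_mx 1 : 'M[R]_(1, N)).

From HB Require Import structures.
From mathcomp Require Import all_boot all_order all_algebra.
From mathcomp Require Import ring lra zify.
Import Order.TTheory GRing.Theory Num.Theory.
Local Open Scope ring_scope.

(* Let L be the Laplacian of the path and let Y be the
   explicit N x N matrix of the claimed entries.  We show:
   (a) Y is symmetric with zero row sums, and L Y + Y L^T = 2 I + G 1^T + 1 G^T
       for an explicit column G; entrywise this is a telescoping identity,
       because L acts on columns as the backward difference f_i - f_{i-1}.
   (b) Conjugating by Q (which kills 1, and satisfies Q Q^T = I, Q^T Q = Pi)
       turns (a) into a solution Sigma0 = Q Y Q^T / 2 of the reduced Lyapunov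
       equation Lbar S + S Lbar^T = I.
   (c) Lbar = I + M with M = Q B Q^T, where B = L + 1 e_0^T - I is strictly
       lower triangular, hence nilpotent; the Lyapunov equation with a
       unipotent coefficient has a unique solution, so Sigma = Sigma0.
   Finally X = 2 Q^T Sigma0 Q = Pi Y Pi = Y.
   Powers of square matrices are taken through [mxpow] since 'M_n is a ring
   only for n > 0, and here n = N - 1 may vanish. *)

Lemma sum_delta (R : nzRingType) (n i : nat) (F : nat -> R) :
  \sum_(m < n) (if i == (m : nat) then F m else 0) =
  if (i < n)%N then F i else 0.
Proof.
elim: n => [|n IH]; first by rewrite big_ord0.
rewrite big_ord_recr /= IH.
by case: ifP => h1; case: ifP => /eqP h2; case: ifP => h3;
  rewrite ?addr0 ?add0r ?h2 //; lia.
Qed.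

Definition path_lap (R : nzRingType) (i j : nat) : R :=
  (if i == j then (if (0 < i)%N then 1 else 0) else 0)
  - (if i == j.+1 then 1 else 0).

(* [path_adj] has out-degree 1 at every node except the root. *)
Lemma laplacian_pathE (R : nzRingType) N (i j : 'I_N) :
  laplacian (path_adj R N) i j = path_lap R i j.
Proof.
rewrite /laplacian /outdeg_mx /path_adj !mxE.
under eq_bigr do rewrite mxE.
rewrite /path_lap; congr (_ - _).
have -> : (i == j) = ((i : nat) == j) by [].
case: ((i : nat) == j); rewrite ?mulr0n ?mulr1n //.
case: i => [[|i] hi] /=; first by rewrite big1.
under eq_bigr do rewrite eqSS.
by rewrite (@sum_delta R N i (fun _ => 1)) ltnW.
Qed.

Lemma path_lap_mulE (R : nzRingType) n i (F : nat -> R) : (i < n)%N ->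
  \sum_(m < n) path_lap R i m * F m =
  if (0 < i)%N then F i - F i.-1 else 0.
Proof.
move=> hi; rewrite /path_lap.
under eq_bigr do rewrite mulrBl.
rewrite sumrB.
have -> : \sum_(m < n) (if i == (m : nat) then (if (0 < i)%N then 1 else 0)
                        else 0) * F m
   = \sum_(m < n) (if i == (m : nat) then (if (0 < i)%N then F m else 0) else 0).
  by apply: eq_bigr => m _; case: eqP; rewrite ?mul0r //; case: ifP;
     rewrite ?mul1r ?mul0r.
rewrite (@sum_delta R n i (fun m => if (0 < i)%N then F m else 0)) hi.
case: i hi => [|i] hi /=; first by rewrite big1 ?subr0 // => m _; rewrite mul0r.
have -> : \sum_(m < n) (if i.+1 == (m : nat).+1 then 1 else 0) * F m
   = \sum_(m < n) (if i == (m : nat) then F m else 0).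
  by apply: eq_bigr => m _; rewrite eqSS; case: eqP; rewrite ?mul1r ?mul0r.
by rewrite (@sum_delta R n i F) ltnW.
Qed.

Lemma laplacian_path_const (R : nzRingType) N :
  laplacian (path_adj R N) *m (const_mx 1 : 'M[R]_(N, 1)) = 0.
Proof.
apply/matrixP => a b; rewrite !mxE.
under eq_bigr do rewrite laplacian_pathE mxE.
by rewrite (@path_lap_mulE R N a (fun _ => 1)) //; case: ifP; rewrite ?subrr.
Qed.

Definition xpath (R : realFieldType) (N i j : nat) : R :=
  let kk : R := (i.+1)%:R in let jj : R := (j.+1)%:R in let NN : R := N%:R in
  (2%:R * NN ^+ 2 + 3%:R * NN + 1 + 3%:R * kk ^+ 2 + 3%:R * jj ^+ 2
   - 3%:R * (NN + 1) * kk - 3%:R * (NN + 1) * jj) / (3%:R * NN)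
  - `|kk - jj|.

Definition gpath (R : realFieldType) (N i : nat) : R := (2 * i%:R - N%:R) / N%:R.

Lemma xpath_sym (R : realFieldType) N i j : xpath R N i j = xpath R N j i.
Proof. by rewrite /xpath distrC; congr (_ / _ - _); ring. Qed.

Lemma dist_natr (R : realDomainType) (i j : nat) :
  `|i%:R - j%:R : R| = if (i <= j)%N then j%:R - i%:R else i%:R - j%:R.
Proof.
case: leqP => h; first by rewrite distrC ger0_norm // subr_ge0 ler_nat.
by rewrite ger0_norm // subr_ge0 ler_nat ltnW.
Qed.

(* The backward difference of a row of [xpath]; at the root the formula
   still holds, the right-hand side vanishing there. *)
Lemma xpath_step (R : realFieldType) N i j : (0 < N)%N ->
  (if (0 < i)%N then xpath R N i j - xpath R N i.-1 j else 0) =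
  gpath R N i + (if (i <= j)%N then 1 else -1).
Proof.
move=> hN; have N0 : (N%:R : R) != 0 by rewrite pnatr_eq0 -lt0n.
rewrite /xpath /gpath !dist_natr.
case: i => [|i] /=; first by field.
by do ![case: leqP => ? /=]; try lia; try (have -> : j = i by lia);
   rewrite ?mulrSr; field.
Qed.

Lemma xpath_lyapunov_entry (R : realFieldType) N i j : (0 < N)%N ->
  (if (0 < i)%N then xpath R N i j - xpath R N i.-1 j else 0)
  + (if (0 < j)%N then xpath R N i j - xpath R N i j.-1 else 0)
  = (2 : R) *+ (i == j) + gpath R N i + gpath R N j.
Proof.
move=> hN; rewrite xpath_step // (xpath_sym _ _ i j) (xpath_sym _ _ i j.-1).
rewrite xpath_step //.
by case: (ltngtP i j) => _; rewrite ?mulr0n ?mulr1n; ring.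
Qed.

Lemma sum_succ (R : realFieldType) n :
  \sum_(j < n) ((j.+1)%:R : R) = n%:R * (n%:R + 1) / 2.
Proof.
elim: n => [|n IH]; first by rewrite big_ord0 !mul0r.
by rewrite big_ord_recr /= IH; field.
Qed.

Lemma sum_succ_sq (R : realFieldType) n :
  \sum_(j < n) ((j.+1)%:R ^+ 2 : R) = n%:R * (n%:R + 1) * (2 * n%:R + 1) / 6.
Proof.
elim: n => [|n IH]; first by rewrite big_ord0 !mul0r.
by rewrite big_ord_recr /= IH; field.
Qed.

Lemma sum_dist_prefix (R : realFieldType) i m : (m <= i.+1)%N ->
  \sum_(j < m) `|(i.+1)%:R - (j.+1)%:R : R| =
  m%:R * i%:R - m%:R * (m%:R - 1) / 2.
Proof.
elim: m => [|m IH] hm; first by rewrite big_ord0 !mul0r subr0.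
rewrite big_ord_recr /= IH 1?distrC ?dist_natr ?ifT; try lia.
by field.
Qed.

Lemma sum_dist (R : realFieldType) i n : (i < n)%N ->
  \sum_(j < n) `|(i.+1)%:R - (j.+1)%:R : R| =
  (i%:R * (i%:R + 1) + (n%:R - 1 - i%:R) * (n%:R - i%:R)) / 2.
Proof.
move=> h; have [d ->] : exists d, n = (i.+1 + d)%N by exists (n - i.+1)%N; lia.
elim: d => [|d IH]; first by rewrite addn0 sum_dist_prefix //; field.
rewrite addnS big_ord_recr /= IH dist_natr ifT; last by lia.
by rewrite !natrD; field.
Qed.

Lemma xpath_row_sum (R : realFieldType) N i : (i < N)%N ->
  \sum_(j < N) xpath R N i j = 0.
Proof.
move=> hi; have N0 : (N%:R : R) != 0 by rewrite pnatr_eq0; lia.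
set K : R := (i.+1)%:R; set NN : R := N%:R.
have -> : \sum_(j < N) xpath R N i j = \sum_(j < N)
   ((2 * NN ^+ 2 + 3 * NN + 1 + 3 * K ^+ 2 - 3 * (NN + 1) * K) / (3 * NN)
    + NN^-1 * ((j.+1)%:R ^+ 2) + (- (NN + 1) / NN) * (j.+1)%:R
    - `|K - (j.+1)%:R|).
  by apply: eq_bigr => j _; rewrite /xpath -/K -/NN; field.
rewrite sumrB !big_split /= sumr_const card_ord -!mulr_sumr mulr_natr.
by rewrite /K /NN sum_succ sum_succ_sq sum_dist //; field.
Qed.

Definition Xpath (R : realFieldType) N : 'M[R]_N := \matrix_(a, b) xpath R N a b.
Definition Gpath (R : realFieldType) N : 'cV[R]_N := \col_a gpath R N a.

Lemma Xpath_tr (R : realFieldType) N : (Xpath R N)^T = Xpath R N.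
Proof. by apply/matrixP => a b; rewrite !mxE xpath_sym. Qed.

Lemma Xpath_const (R : realFieldType) N :
  Xpath R N *m (const_mx 1 : 'M[R]_(N, 1)) = 0.
Proof.
apply/matrixP => a b; rewrite !mxE.
under eq_bigr do rewrite !mxE mulr1.
exact: xpath_row_sum.
Qed.

Lemma const_Xpath (R : realFieldType) N :
  (const_mx 1 : 'M[R]_(1, N)) *m Xpath R N = 0.
Proof. by rewrite -[X in X *m _]trmx_const -Xpath_tr -trmx_mul Xpath_const trmx0. Qed.

Lemma Xpath_lyapunov (R : realFieldType) N :
  let L := laplacian (path_adj R N) in
  L *m Xpath R N + Xpath R N *m L^T =
  (2 : R)%:M + Gpath R N *m const_mx 1 + const_mx 1 *m (Gpath R N)^T.
Proof.
move=> L; apply/matrixP => a b; rewrite !mxE.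
under eq_bigr do rewrite laplacian_pathE mxE.
under [X in _ + X = _]eq_bigr do rewrite mxE [L^T _ _]mxE laplacian_pathE mulrC.
rewrite (@path_lap_mulE R N a (fun m => xpath R N m b)) //.
rewrite (@path_lap_mulE R N b (fun m => xpath R N a m)) //.
rewrite !big_ord1 !mxE mulr1 mul1r.
by apply: xpath_lyapunov_entry; case: a => a /=; lia.
Qed.

Lemma mulmx_Pi {R : fieldType} {m N} {A : 'M[R]_(m, N)} :
  A *m (const_mx 1 : 'M[R]_(N, 1)) = 0 -> A *m Pi_mx R N = A.
Proof.
by move=> h; rewrite mulmxBr mulmx1 !mulmxA -scalemxAr h scaler0 mul0mx subr0.
Qed.

Lemma Pi_mulmx {R : fieldType} {m N} {A : 'M[R]_(N, m)} :
  (const_mx 1 : 'M[R]_(1, N)) *m A = 0 -> Pi_mx R N *m A = A.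
Proof. by move=> h; rewrite mulmxBl mul1mx -mulmxA h mulmx0 subr0. Qed.

Section Compression.
Context {R : comNzRingType} {m n : nat} {Q : 'M[R]_(m, n)} {P : 'M[R]_n}.
Hypothesis QtQ : Q^T *m Q = P.

Lemma compress_mul (A B : 'M[R]_n) :
  (Q *m A *m Q^T) *m (Q *m B *m Q^T) = Q *m (A *m P *m B) *m Q^T.
Proof. by rewrite -!mulmxA (mulmxA Q^T Q) QtQ !mulmxA. Qed.

Lemma compress_tr (A : 'M[R]_n) : (Q *m A *m Q^T)^T = Q *m A^T *m Q^T.
Proof. by rewrite !trmx_mul trmxK mulmxA. Qed.

Lemma expand_compress (A : 'M[R]_n) : Q^T *m (Q *m A *m Q^T) *m Q = P *m A *m P.
Proof. by rewrite !mulmxA QtQ -mulmxA QtQ. Qed.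

End Compression.

Lemma compressed_lyapunov_solution {R : fieldType} {m n} {Q : 'M[R]_(m, n)}
    {L Y : 'M[R]_n} {G H : 'cV[R]_n} {c : R} :
  Q *m (const_mx 1 : 'M[R]_(n, 1)) = 0 ->
  Q *m Q^T = 1%:M -> Q^T *m Q = Pi_mx R n ->
  L *m Pi_mx R n = L -> Y *m Pi_mx R n = Y -> c != 0 ->
  L *m Y + Y *m L^T = c%:M + G *m const_mx 1 + const_mx 1 *m H^T ->
  let Lbar := Q *m L *m Q^T in let S := c^-1 *: (Q *m Y *m Q^T) in
  Lbar *m S + S *m Lbar^T = 1%:M.
Proof.
move=> Q1 QQt QtQ LPi YPi c0 hLY Lbar S.
have Q1r : (const_mx 1 : 'M[R]_(1, n)) *m Q^T = 0.
  by rewrite -[X in X *m _]trmx_const -trmx_mul Q1 trmx0.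
rewrite /S /Lbar compress_tr -scalemxAr -scalemxAl !(compress_mul QtQ) LPi YPi.
rewrite -scalerDr -mulmxDl -mulmxDr hLY !mulmxDr !mulmxDl.
rewrite -!mulmxA Q1r !mulmx0 [Q *m (const_mx 1 *m _)]mulmxA Q1 mul0mx !addr0.
by rewrite mul_scalar_mx -scalemxAr QQt scalerA mulVf // scale1r.
Qed.

(* Compression ignores rank-one terms 1 e^T and maps I to I. *)
Lemma compress_shift {R : nzRingType} {m n} {Q : 'M[R]_(m, n)}
    (A : 'M[R]_n) (e : 'rV[R]_n) :
  Q *m (const_mx 1 : 'M[R]_(n, 1)) = 0 -> Q *m Q^T = 1%:M ->
  Q *m A *m Q^T = 1%:M + Q *m (A + const_mx 1 *m e - 1%:M) *m Q^T.
Proof.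
move=> Q1 QQt; rewrite mulmxBr mulmxDr mulmxBl mulmxDl mulmx1 QQt.
by rewrite [Q *m (_ *m _)]mulmxA Q1 !mul0mx addr0 [RHS]addrC subrK.
Qed.

Definition mxpow (R : nzRingType) n (B : 'M[R]_n) (a : nat) : 'M[R]_n :=
  iter a (mulmx B) 1%:M.
Arguments mxpow {R n}.

Lemma mxpow_comm (R : nzRingType) n (B : 'M[R]_n) a :
  mxpow B a *m B = B *m mxpow B a.
Proof.
elim: a => [|a IH]; first by rewrite /mxpow /= mul1mx mulmx1.
by rewrite /mxpow /= -mulmxA -/(mxpow B a) IH.
Qed.

Lemma mxpow_strict_lower {R : nzRingType} {n} {B : 'M[R]_n} :
  (forall i j : 'I_n, (i <= j)%N -> B i j = 0) ->
  forall a (i j : 'I_n), (i < j + a)%N -> mxpow B a i j = 0.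
Proof.
move=> hB; elim=> [|a IH] i j hij.
  by rewrite /mxpow /= mxE; move: hij; rewrite addn0 => /ltn_eqF;
     rewrite -val_eqE => ->.
rewrite /mxpow /= mxE big1 // => m _.
by case: (leqP i m) => h; [rewrite hB // mul0r | rewrite IH ?mulr0 //; lia].
Qed.

Lemma strict_lower_nilpotent {R : nzRingType} {n} {B : 'M[R]_n} :
  (forall i j : 'I_n, (i <= j)%N -> B i j = 0) ->
  forall a, (n <= a)%N -> mxpow B a = 0.
Proof.
move=> Bstrict a ha; apply/matrixP => i j.
by rewrite mxE (mxpow_strict_lower Bstrict) //; case: i => i /=; lia.
Qed.

Lemma mxpow_compress {R : comNzRingType} {m n} {Q : 'M[R]_(m, n)}
    {P B : 'M[R]_n} :
  Q *m Q^T = 1%:M -> Q^T *m Q = P -> B *m P = B ->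
  forall a, mxpow (Q *m B *m Q^T) a = Q *m mxpow B a *m Q^T.
Proof.
move=> QQt QtQ BP; elim=> [|a IH]; first by rewrite /mxpow /= mulmx1 QQt.
by rewrite [LHS]/mxpow /= -/(mxpow _ a) IH (compress_mul QtQ) BP.
Qed.

(* Uniqueness for the Lyapunov equation (I + M) D + D (I + M)^T = 0 with M
   nilpotent: with D_{a,b} = M^a D (M^b)^T one has
   D_{a+1,b} + D_{a,b+1} + 2 D_{a,b} = 0, and D_{a,b} = 0 once a or b is
   large, so downward induction on a + b gives D = D_{0,0} = 0. *)
Lemma lyapunov_unipotent_unique {R : numFieldType} {n} {M D : 'M[R]_n} {k} :
  (forall a, (k <= a)%N -> mxpow M a = 0) ->
  (1%:M + M) *m D + D *m (1%:M + M)^T = 0 -> D = 0.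
Proof.
move=> Mnil hD.
have hD' : M *m D + D *m M^T + (D + D) = 0.
  by rewrite -hD raddfD /= trmx1 mulmxDl mulmxDr mul1mx mulmx1 [RHS]addrACA addrC.
pose Dab a b := mxpow M a *m D *m (mxpow M b)^T.
have DabSl a b : Dab a.+1 b = mxpow M a *m (M *m D) *m (mxpow M b)^T.
  by rewrite /Dab [mxpow M a.+1]/mxpow /= -/(mxpow M a) -mxpow_comm !mulmxA.
have DabSr a b : Dab a b.+1 = mxpow M a *m (D *m M^T) *m (mxpow M b)^T.
  by rewrite /Dab [mxpow M b.+1]/mxpow /= -/(mxpow M b) -mxpow_comm trmx_mul
     !mulmxA.
have Drec a b : Dab a.+1 b + Dab a b.+1 + (Dab a b + Dab a b) = 0.
  have := congr1 (fun Z => mxpow M a *m Z *m (mxpow M b)^T) hD'.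
  by rewrite /= !mulmxDr !mulmxDl -DabSl -DabSr mulmx0 mul0mx.
have Dvanish d a b : (2 * k <= a + b + d)%N -> Dab a b = 0.
  elim: d a b => [|d IH] a b h.
    case: (leqP k a) => ha; first by rewrite /Dab Mnil // !mul0mx.
    by rewrite /Dab (Mnil b) ?trmx0 ?mulmx0 //; lia.
  have next_a : Dab a.+1 b = 0 by apply: IH; lia.
  have next_b : Dab a b.+1 = 0 by apply: IH; lia.
  move: (Drec a b); rewrite next_a next_b !add0r => /eqP.
  by rewrite -mulr2n -scaler_nat scaler_eq0 pnatr_eq0 => /eqP.
have := Dvanish (2 * k)%N 0%N 0%N (leqnn _).
by rewrite /Dab /mxpow /= mul1mx trmx1 mulmx1.
Qed.

(* The path Laplacian is I + (nilpotent) modulo the all-ones direction: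
   B = L + 1 e_0^T - I is strictly lower triangular and kills 1. *)
Lemma path_shift_props (R : realFieldType) N : (0 < N)%N ->
  let e0 : 'M[R]_(1, N) := \row_j (if 0%N == (j : nat) then 1 else 0) in
  let B := laplacian (path_adj R N) + const_mx 1 *m e0 - 1%:M in
  B *m (const_mx 1 : 'M[R]_(N, 1)) = 0 /\ (forall a m : 'I_N, (a <= m)%N -> B a m = 0).
Proof.
move=> hN e0 B.
have BE (a m : 'I_N) : B a m = path_lap R a m
    + (if 0%N == (m : nat) then 1 else 0) - (if (a : nat) == m then 1 else 0).
  rewrite 2!mxE laplacian_pathE !mxE big_ord1 !mxE mul1r.
  by rewrite (_ : (a == m) = ((a : nat) == m)) //; case: ((a : nat) == m).
split.
  apply/matrixP => a b; rewrite mxE [in RHS]mxE.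
  under eq_bigr do rewrite BE mxE mulr1.
  rewrite sumrB big_split /=.
  rewrite (@sum_delta R N 0 (fun _ => 1)) (@sum_delta R N a (fun _ => 1)) hN ltn_ord.
  under eq_bigr do rewrite -[path_lap _ _ _]mulr1.
  rewrite (@path_lap_mulE R N a (fun _ => 1)) //.
  by case: ifP; rewrite ?subrr ?add0r ?subrr.
move=> a m h; rewrite BE /path_lap.
by case: (ltngtP a m) h => // h _; do ![case: ifP => /= ?]; try lia; lra.
Qed.

Theorem lemma5 (R : realFieldType) (N : nat)
  (Q : 'M[R]_(N.-1, N)) (Sigma : 'M[R]_(N.-1))
  (hQ1 : Q *m (const_mx 1 : 'M[R]_(N, 1)) = 0)
  (hQQt : Q *m Q^T = 1%:M)
  (hQtQ : Q^T *m Q = Pi_mx R N)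
  (hSigma : let Lbar := Q *m laplacian (path_adj R N) *m Q^T in
            Lbar *m Sigma + Sigma *m Lbar^T = 1%:M) :
  let X := 2%:R *: (Q^T *m Sigma *m Q) in
  forall k j : 'I_N,
    let kk : R := (k.+1)%:R in
    let jj : R := (j.+1)%:R in
    let NN : R := N%:R in
    X k j = (2%:R * NN ^+ 2 + 3%:R * NN + 1 + 3%:R * kk ^+ 2 + 3%:R * jj ^+ 2
             - 3%:R * (NN + 1) * kk - 3%:R * (NN + 1) * jj) / (3%:R * NN)
            - `|kk - jj|.
Proof.
move=> X k j kk jj NN.
have hN : (0 < N)%N by move: (ltn_ord k); lia.
set L := laplacian (path_adj R N); set Y := Xpath R N.
have two0 : (2%:R : R) != 0 by rewrite pnatr_eq0.
have LPi := mulmx_Pi (laplacian_path_const R N).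
have YPi := mulmx_Pi (Xpath_const R N).
have PiY := Pi_mulmx (const_Xpath R N).
have hSigma0 := compressed_lyapunov_solution hQ1 hQQt hQtQ LPi YPi two0
  (Xpath_lyapunov R N).
have [B1 Bstrict] := path_shift_props R N hN.
set B := _ - 1%:M in B1 Bstrict.
have LbarE : Q *m L *m Q^T = 1%:M + Q *m B *m Q^T :=
  compress_shift _ _ hQ1 hQQt.
have Mnil a : (N <= a)%N -> mxpow (Q *m B *m Q^T) a = 0.
  move=> ha; rewrite (mxpow_compress hQQt hQtQ (mulmx_Pi B1)).
  by rewrite (strict_lower_nilpotent Bstrict) // mulmx0 mul0mx.
have SigmaE : Sigma = 2%:R^-1 *: (Q *m Y *m Q^T).
  apply/subr0_eq/(lyapunov_unipotent_unique Mnil); rewrite -LbarE.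
  by rewrite mulmxBr mulmxBl addrACA -opprD hSigma hSigma0 subrr.
rewrite /X SigmaE -scalemxAr -scalemxAl scalerA mulfV // scale1r.
by rewrite (expand_compress hQtQ) PiY YPi mxE.
Qed.
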